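(* Let $d\ge1$, let $\{1,\dots,d\}$ be partitioned into $\mathcal{D}$ and $\mathcal{U}$ with $|\mathcal{D}|=1$, let $\mathbb{C}$ be the contribution matrix of a causal graph, $c\in\mathbb{R}^d$ with $c_f>0$, $\alpha>0$, $p\in[1,3]$, and $\beta\in(0,1]$. Then the set $$\mathcal{H}=\{h_0\in\mathbb{R}^d:\ \mathbb{C}h_0\ge0\ \text{and every optimal solution of } \min_{e\ge0}\Big(\sum_f c_fe_f^{\,p}\Big)^{1/p}\ \text{s.t.}\ (\mathbb{C}h_0)^\top e\ge\alpha\ \text{is }\beta\text{-desirable}\}$$ of $\beta$-desirable classifiers is convex.
   Context: A causal graph is a weighted directed acyclic graph on $\{1,\dots,d\}$ with adjacency matrix $A$ ($A_{ij}$ the weight of edge $i\to j$, $0$ if absent); its contribution matrix is $\mathbb{C}=\sum_{k=0}^{d}A^k$. $\mathcal{D}$ is the set of desirable features, $\mathcal{U}$ the set of undesirable features. An effort profile $e$ is $\beta$-desirable if $\|e_{\mathcal{D}}\|_2\ge\beta\|e\|_2$, where $e_{\mathcal{D}}$ is the restriction of $e$ to coordinates in $\mathcal{D}$. *)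

From HB Require Import structures.
From mathcomp Require Import all_boot all_order all_algebra.
From mathcomp Require Import reals exp.
Set Implicit Arguments.
Unset Strict Implicit.
Unset Printing Implicit Defensive.
Import Order.TTheory GRing.Theory Num.Theory.
Local Open Scope ring_scope.

Section Defs.
Variables (R : realType) (d : nat).

Definition is_dag (A : 'M[R]_d) : Prop :=
  forall (x : 'I_d) (s : seq 'I_d),
    path (fun i j => A i j != 0) x s -> last x s = x -> s = [::].

Definition contribution (A : 'M[R]_d) : 'M[R]_d := \sum_(k < d.+1) A ^+ k.

Definition cost (c : 'cV[R]_d) (p : R) (e : 'cV[R]_d) : R :=
  powR (\sum_(f < d) c f 0 * powR (e f 0) p) p^-1.

Definition feasible (C : 'M[R]_d) (h0 : 'cV[R]_d) (alpha : R) (e : 'cV[R]_d) : Prop :=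
  (forall f, 0 <= e f 0) /\ alpha <= \sum_(f < d) (C *m h0) f 0 * e f 0.

Definition optimal (C : 'M[R]_d) (c : 'cV[R]_d) (p alpha : R) (h0 e : 'cV[R]_d) : Prop :=
  feasible C h0 alpha e /\
  forall e', feasible C h0 alpha e' -> cost c p e <= cost c p e'.

Definition beta_desirable (D : {set 'I_d}) (beta : R) (e : 'cV[R]_d) : Prop :=
  beta * Num.sqrt (\sum_(f < d) e f 0 ^+ 2) <= Num.sqrt (\sum_(f in D) e f 0 ^+ 2).

Definition desirable_classifiers (C : 'M[R]_d) (D : {set 'I_d}) (c : 'cV[R]_d)
    (p alpha beta : R) (h0 : 'cV[R]_d) : Prop :=
  (forall f, 0 <= (C *m h0) f 0) /\
  forall e, optimal C c p alpha h0 e -> beta_desirable D beta e.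

End Defs.

From HB Require Import structures.
From mathcomp Require Import all_boot all_order all_algebra.
From mathcomp Require Import reals exp.
From mathcomp Require Import ring lra.
Set Implicit Arguments.
Unset Strict Implicit.
Unset Printing Implicit Defensive.

Import Order.TTheory GRing.Theory Num.Theory.
Local Open Scope ring_scope.

(* Write D = {k} and x_f = (C h0)_f / c_f for the benefit per unit cost of
   feature f ([efficiency]).  For p > 1 the cost is strictly convex and the
   Lagrange conditions single out the optimum e_f ~ x_f^(1/(p-1)), so h0 is
   beta-desirable iff beta^2 sum_f x_f^s <= x_k^s with s = 2/(p-1) >= 1 (as
   p <= 3).  For p = 1 the program is linear, its optima live on argmax x, and
   h0 is beta-desirable iff x = 0 or k is the strict argmax of x.  Both
   conditions cut out convex cones of x -- the first because the perspective of
   t |-> t^s is convex -- and x is linear in h0.  When C h0 = 0 nothing is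
   feasible and h0 is desirable vacuously. *)

Section PowerInequalities.
Variable R : realType.
Implicit Types p s a t : R.

(* For p > 1 this is Young's inequality with the conjugate exponents p and
   p / (p - 1). *)
Lemma powR_tangent p a t : 1 <= p -> 0 <= a -> 0 <= t ->
  p * powR a (p - 1) * t <= powR t p + (p - 1) * powR a p.
Proof.
move=> p_ge1 a_ge0 t_ge0.
have [->|p_neq1] := eqVneq p 1.
  by rewrite subrr powRr0 powRr1 // mul0r addr0 !mul1r.
have p_gt1 : 1 < p by rewrite lt_neqAle eq_sym p_neq1 p_ge1.
have p_gt0 : 0 < p by apply: lt_trans p_gt1.
have p1_gt0 : 0 < p - 1 by rewrite subr_gt0.
have q_gt0 : 0 < p / (p - 1) by rewrite divr_gt0.
have conj_pq : p^-1 + (p / (p - 1))^-1 = 1.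
  by rewrite invf_div mulrBl divff ?gt_eqF // mul1r addrC subrK.
have := conjugate_powR t_ge0 (powR_ge0 a (p - 1)) p_gt0 q_gt0 conj_pq.
rewrite -powRrM mulrCA divff ?gt_eqF // mulr1.
move: (powR a (p - 1)) (powR t p) (powR a p) => G T P young.
suff -> : T + (p - 1) * P = p * (T / p + P / (p / (p - 1))).
  by rewrite -mulrA [G * t]mulrC ler_wpM2l // ltW.
by field; rewrite !gt_eqF.
Qed.

Lemma powR_tangent_eq p a t : 1 < p -> 0 <= a -> 0 <= t ->
  p * powR a (p - 1) * t = powR t p + (p - 1) * powR a p -> t = a.
Proof.
move=> p_gt1 a_ge0 t_ge0 E.
have p_ge1 := ltW p_gt1.
have p1_gt0 : 0 < p - 1 by rewrite subr_gt0.
have p_gt0 : 0 < p by apply: lt_trans p_gt1.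
pose v := (a + t) / 2.
have v_ge0 : 0 <= v by rewrite divr_ge0 // addr_ge0.
have T1 := powR_tangent p_ge1 a_ge0 v_ge0.
have T2 := powR_tangent p_ge1 v_ge0 a_ge0.
have T3 := powR_tangent p_ge1 v_ge0 t_ge0.
have v2 : v * 2 = a + t by rewrite /v mulfVK // pnatr_eq0.
rewrite -(mulr_powRB1 a_ge0 p_gt0) -(mulr_powRB1 v_ge0 p_gt0) in T1 T2 T3 E.
set Ga := powR a (p - 1) in T1 T2 T3 E *.
set Gv := powR v (p - 1) in T1 T2 T3 E *.
(* Adding the tangent inequalities at the midpoint v to the assumed equality
   leaves (t - a) (v^(p-1) - a^(p-1)) = 0; then injectivity of powR gives v = a. *)
have : p * ((t - a) * (Gv - Ga)) = 0.
  have h1 : p * Ga * (a + t) = 2 * (p * Ga * v) by rewrite -v2; ring.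
  have h2 : p * Gv * (a + t) = 2 * (p * Gv * v) by rewrite -v2; ring.
  nra.
move/eqP; rewrite !mulf_eq0 (gt_eqF p_gt0) /= !subr_eq0 => /orP[/eqP //|/eqP GvGa].
have va : v = a by apply: (powR_injective p1_gt0); rewrite ?nnegrE.
lra.
Qed.

Lemma powR_perspective s (A B Y1 Y2 : R) : 1 <= s -> 0 <= A -> 0 <= B ->
  0 < Y1 -> 0 < Y2 ->
  (Y1 + Y2) * powR ((A + B) / (Y1 + Y2)) s <=
  Y1 * powR (A / Y1) s + Y2 * powR (B / Y2) s.
Proof.
move=> s_ge1 A_ge0 B_ge0 Y1_gt0 Y2_gt0.
have s_gt0 : 0 < s by apply: lt_le_trans s_ge1.
have Y_gt0 : 0 < Y1 + Y2 by rewrite addr_gt0.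
pose m := (A + B) / (Y1 + Y2).
have m_ge0 : 0 <= m by apply: divr_ge0; [exact: addr_ge0 | exact: ltW].
have T1 := ler_wpM2l (ltW Y1_gt0) (powR_tangent s_ge1 m_ge0
  (divr_ge0 A_ge0 (ltW Y1_gt0))).
have T2 := ler_wpM2l (ltW Y2_gt0) (powR_tangent s_ge1 m_ge0
  (divr_ge0 B_ge0 (ltW Y2_gt0))).
have hA : Y1 * (s * powR m (s - 1) * (A / Y1)) = s * powR m (s - 1) * A.
  by rewrite mulrCA [Y1 * _]mulrC mulfVK ?gt_eqF.
have hB : Y2 * (s * powR m (s - 1) * (B / Y2)) = s * powR m (s - 1) * B.
  by rewrite mulrCA [Y2 * _]mulrC mulfVK ?gt_eqF.
have hAB : s * powR m (s - 1) * A + s * powR m (s - 1) * B =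
    s * (Y1 + Y2) * powR m s.
  have mY : m * (Y1 + Y2) = A + B by rewrite /m mulfVK ?gt_eqF.
  by rewrite -(mulr_powRB1 m_ge0 s_gt0) -mulrDr -mY; ring.
rewrite hA in T1; rewrite hB in T2.
rewrite -/m; nra.
Qed.

End PowerInequalities.

Section DominanceCones.
Variables (R : realType) (d : nat) (k : 'I_d).
Implicit Types (beta s a b : R) (x y : 'cV[R]_d).

Definition pow_dominant beta s x :=
  beta ^+ 2 * \sum_f powR (x f 0) s <= powR (x k 0) s.

Definition strict_argmax_or_zero x :=
  x = 0 \/ forall f, f != k -> x f 0 < x k 0.

Lemma pow_dominantZ beta s a x : 0 <= a -> (forall f, 0 <= x f 0) ->
  pow_dominant beta s x -> pow_dominant beta s (a *: x).
Proof.
rewrite /pow_dominant => a_ge0 x_ge0 dom.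
under eq_bigr => f _ do rewrite mxE powRM //.
by rewrite mxE powRM // -mulr_sumr mulrCA ler_wpM2l ?powR_ge0.
Qed.

Lemma pow_dominant_eq0 beta s y : 0 < beta -> 0 < s ->
  (forall f, 0 <= y f 0) -> y k 0 = 0 -> pow_dominant beta s y -> y = 0.
Proof.
move=> beta_gt0 s_gt0 y_ge0 yk0; rewrite /pow_dominant yk0 powR0 ?gt_eqF // => dom.
have sum0 : \sum_f powR (y f 0) s = 0.
  apply/eqP; rewrite eq_le sumr_ge0 ?andbT => [|f _]; last exact: powR_ge0.
  by rewrite -(ler_pM2l (exprn_gt0 2 beta_gt0)) mulr0.
apply/matrixP => f j; rewrite [j]ord1 mxE; apply: (@powR_eq0_eq0 _ _ s).
exact: (psumr_eq0P (fun i _ => powR_ge0 _ _) sum0).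
Qed.

Lemma pow_dominant_perspectiveE beta s y :
  (forall f, 0 <= y f 0) -> 0 < y k 0 ->
  pow_dominant beta s y <->
  beta ^+ 2 * \sum_f y k 0 * powR (y f 0 / y k 0) s <= y k 0.
Proof.
move=> y_ge0 yk_gt0; have Ps_gt0 : 0 < powR (y k 0) s by apply: powR_gt0.
have -> : \sum_f y k 0 * powR (y f 0 / y k 0) s =
    y k 0 / powR (y k 0) s * \sum_f powR (y f 0) s.
  rewrite mulr_sumr; apply: eq_bigr => f _.
  rewrite powRM ?invr_ge0 ?(ltW yk_gt0) // -powR_inv1 ?(ltW yk_gt0) //.
  by rewrite -powRrM mulN1r powRN; ring.
rewrite /pow_dominant -(ler_pM2l (divr_gt0 yk_gt0 Ps_gt0)) mulfVK ?gt_eqF //.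
by rewrite mulrCA.
Qed.

Lemma pow_dominantD beta s y1 y2 : 0 < beta -> 1 <= s ->
  (forall f, 0 <= y1 f 0) -> (forall f, 0 <= y2 f 0) ->
  pow_dominant beta s y1 -> pow_dominant beta s y2 ->
  pow_dominant beta s (y1 + y2).
Proof.
move=> beta_gt0 s_ge1 y1_ge0 y2_ge0 dom1 dom2.
have s_gt0 : 0 < s by apply: lt_le_trans s_ge1.
have [yk1_0|yk1_neq0] := eqVneq (y1 k 0) 0.
  by rewrite (pow_dominant_eq0 beta_gt0 s_gt0 y1_ge0 yk1_0 dom1) add0r.
have [yk2_0|yk2_neq0] := eqVneq (y2 k 0) 0.
  by rewrite (pow_dominant_eq0 beta_gt0 s_gt0 y2_ge0 yk2_0 dom2) addr0.
have yk1_gt0 : 0 < y1 k 0 by rewrite lt_neqAle eq_sym yk1_neq0 y1_ge0.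
have yk2_gt0 : 0 < y2 k 0 by rewrite lt_neqAle eq_sym yk2_neq0 y2_ge0.
have y_ge0 f : 0 <= (y1 + y2) f 0 by rewrite mxE addr_ge0.
apply/(pow_dominant_perspectiveE _ _ y_ge0); first by rewrite mxE addr_gt0.
move/(pow_dominant_perspectiveE _ _ y1_ge0): dom1 => /(_ yk1_gt0) dom1.
move/(pow_dominant_perspectiveE _ _ y2_ge0): dom2 => /(_ yk2_gt0) dom2.
rewrite mxE; apply: le_trans (lerD dom1 dom2).
rewrite -mulrDr -big_split /=; apply: ler_wpM2l; first exact: sqr_ge0.
by apply: ler_sum => f _; rewrite mxE; apply: powR_perspective.
Qed.

Lemma pow_dominant_conv beta s a b x1 x2 :
  0 < beta -> 1 <= s -> 0 <= a -> 0 <= b ->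
  (forall f, 0 <= x1 f 0) -> (forall f, 0 <= x2 f 0) ->
  pow_dominant beta s x1 -> pow_dominant beta s x2 ->
  pow_dominant beta s (a *: x1 + b *: x2).
Proof.
move=> beta_gt0 s_ge1 a_ge0 b_ge0 x1_ge0 x2_ge0 dom1 dom2.
by apply: pow_dominantD; rewrite ?pow_dominantZ // => f; rewrite mxE mulr_ge0.
Qed.

Lemma strict_argmax_or_zero_conv a b x1 x2 : 0 <= a -> 0 <= b -> a + b = 1 ->
  strict_argmax_or_zero x1 -> strict_argmax_or_zero x2 ->
  strict_argmax_or_zero (a *: x1 + b *: x2).
Proof.
move=> a_ge0 b_ge0 ab1 max1 max2.
have [a0|a_neq0] := eqVneq a 0.
  by rewrite a0 scale0r add0r (_ : b = 1) ?scale1r // -ab1 a0 add0r.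
have [b0|b_neq0] := eqVneq b 0.
  by rewrite b0 scale0r addr0 (_ : a = 1) ?scale1r // -ab1 b0 addr0.
have a_gt0 : 0 < a by rewrite lt_neqAle eq_sym a_neq0.
have b_gt0 : 0 < b by rewrite lt_neqAle eq_sym b_neq0.
case: max1 => [->|lt1]; case: max2 => [->|lt2].
- by left; rewrite !scaler0 addr0.
- by right => f fk; rewrite scaler0 add0r !mxE ltr_pM2l // lt2.
- by right => f fk; rewrite scaler0 addr0 !mxE ltr_pM2l // lt1.
- right => f fk; rewrite !mxE.
  by apply: ltrD; rewrite ltr_pM2l // ?lt1 ?lt2.
Qed.

End DominanceCones.

Lemma beta_desirable1 (R : realType) (d : nat) (k : 'I_d) (beta : R)
    (e : 'cV[R]_d) : 0 <= beta ->
  beta_desirable [set k] beta e <-> beta ^+ 2 * \sum_f e f 0 ^+ 2 <= e k 0 ^+ 2.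
Proof.
move=> beta_ge0; rewrite /beta_desirable big_set1.
rewrite -[X in X * _](ger0_norm beta_ge0) -sqrtr_sqr -sqrtrM ?sqr_ge0 //.
by rewrite ler_sqrt ?sqr_ge0.
Qed.

Lemma exists_argmax_neq (T : finType) (R : realDomainType) (x : T -> R)
    (k f : T) : f != k -> x k <= x f -> exists2 g, g != k & forall i, x i <= x g.
Proof.
move=> fk xk_le_xf; have [m _ m_max] := @arg_maxP _ _ _ f xpredT x isT.
have [mk|mk] := eqVneq m k; last by exists m => // i; apply: m_max.
by exists f => // i; apply: le_trans (m_max i isT) _; rewrite mk.
Qed.

Section EffortProgram.
Variables (R : realType) (d : nat) (C : 'M[R]_d) (c : 'cV[R]_d) (alpha : R).
Hypotheses (c_gt0 : forall f, 0 < c f 0) (alpha_gt0 : 0 < alpha).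
Implicit Types (a b mu : R) (h e u : 'cV[R]_d).

Definition efficiency h : 'cV[R]_d := \col_f ((C *m h) f 0 / c f 0).

Lemma efficiency_comb a b h1 h2 :
  efficiency (a *: h1 + b *: h2) = a *: efficiency h1 + b *: efficiency h2.
Proof.
apply/matrixP => f j; rewrite /efficiency mulmxDr -!scalemxAr !mxE.
by rewrite mulrDl !mulrA.
Qed.

Lemma benefit_comb_ge0 a b h1 h2 : 0 <= a -> 0 <= b ->
  (forall f, 0 <= (C *m h1) f 0) -> (forall f, 0 <= (C *m h2) f 0) ->
  forall f, 0 <= (C *m (a *: h1 + b *: h2)) f 0.
Proof.
move=> a_ge0 b_ge0 Ch1_ge0 Ch2_ge0 f.
have -> : (C *m (a *: h1 + b *: h2)) f 0 = a * (C *m h1) f 0 + b * (C *m h2) f 0.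
  by rewrite mulmxDr -!scalemxAr !mxE.
by rewrite addr_ge0 ?mulr_ge0.
Qed.

Lemma benefitE h f : (C *m h) f 0 = efficiency h f 0 * c f 0.
Proof. by rewrite [efficiency h f 0]mxE mulfVK ?gt_eqF. Qed.

Lemma benefit_gt0 h f : 0 < efficiency h f 0 -> 0 < (C *m h) f 0.
Proof. by move=> xf_gt0; rewrite benefitE mulr_gt0. Qed.

Lemma efficiency_ge0 h :
  (forall f, 0 <= (C *m h) f 0) -> forall f, 0 <= efficiency h f 0.
Proof. by move=> Ch_ge0 f; rewrite mxE; apply: divr_ge0; last exact: ltW. Qed.

Lemma efficiency0_infeasible h e : efficiency h = 0 -> ~ feasible C h alpha e.
Proof.
move=> x0 [_]; rewrite big1 => [|f _]; last by rewrite benefitE x0 mxE !mul0r.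
by rewrite leNgt alpha_gt0.
Qed.

Definition cost_sum p e := \sum_f c f 0 * powR (e f 0) p.

Lemma cost_sum_ge0 p e : 0 <= cost_sum p e.
Proof. by apply: sumr_ge0 => f _; rewrite mulr_ge0 ?powR_ge0 ?ltW. Qed.

Lemma cost_le p e e' : 0 < p ->
  (cost c p e <= cost c p e') = (cost_sum p e <= cost_sum p e').
Proof.
move=> p_gt0; have pV_gt0 : 0 < p^-1 by rewrite invr_gt0.
by rewrite /cost (le_mono_in (gt0_ltr_powR pV_gt0)) ?nnegrE ?cost_sum_ge0.
Qed.

Section StrictlyConvexCost.
Variables (p : R) (h : 'cV[R]_d).
Hypotheses (p_gt1 : 1 < p) (Ch_ge0 : forall f, 0 <= (C *m h) f 0).

Let p_gt0 : 0 < p. Proof. exact: lt_trans p_gt1. Qed.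
Let p1_gt0 : 0 < p - 1. Proof. by rewrite subr_gt0. Qed.

Section StationaryEffort.
Variables (u : 'cV[R]_d) (mu : R).
Hypotheses (mu_gt0 : 0 < mu) (u_ge0 : forall f, 0 <= u f 0).
Hypothesis u_stationary :
  forall f, c f 0 * powR (u f 0) (p - 1) = mu * (C *m h) f 0.
Hypothesis u_active : \sum_f (C *m h) f 0 * u f 0 = alpha.

(* Summing the tangent inequalities of t |-> t^p at u_f turns stationarity into
   optimality, and equality in all of them forces e = u. *)
Lemma stationary_effort_argmin e : feasible C h alpha e ->
  cost_sum p u <= cost_sum p e /\ (cost_sum p e <= cost_sum p u -> e = u).
Proof.
move=> [e_ge0 e_feas].
pose gap f := c f 0 * (powR (e f 0) p + (p - 1) * powR (u f 0) p
                        - p * powR (u f 0) (p - 1) * e f 0).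
have gap_ge0 f : 0 <= gap f.
  apply: mulr_ge0; first exact: ltW.
  by rewrite subr_ge0; apply: powR_tangent (ltW p_gt1) (u_ge0 f) (e_ge0 f).
pose X := \sum_f c f 0 * powR (u f 0) (p - 1) * e f 0.
have costu : cost_sum p u = mu * alpha.
  rewrite -u_active /cost_sum mulr_sumr; apply: eq_bigr => f _.
  by rewrite -(mulr_powRB1 (u_ge0 f) p_gt0) mulrCA u_stationary mulrA [_ * u f 0]mulrC.
have costu_le_X : cost_sum p u <= X.
  rewrite costu /X (eq_bigr (fun f => mu * ((C *m h) f 0 * e f 0))) => [|f _].
    by rewrite -mulr_sumr ler_pM2l.
  by rewrite u_stationary mulrA.
have sum_gap : \sum_f gap f = cost_sum p e + (p - 1) * cost_sum p u - p * X.
  rewrite /gap /cost_sum /X !mulr_sumr -sumrN -!big_split /=.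
  by apply: eq_bigr => f _; ring.
have sum_gap_ge0 : 0 <= \sum_f gap f by apply: sumr_ge0.
have := ler_wpM2l (ltW p_gt0) costu_le_X.
split=> [|cost_le_u]; first by lra.
have sum_gap0 : \sum_f gap f = 0 by apply/eqP; rewrite eq_le sum_gap_ge0 andbT; lra.
apply/matrixP => f j; rewrite [j]ord1.
move: (psumr_eq0P (fun i _ => gap_ge0 i) sum_gap0 (i := f) isT).
rewrite /gap => /eqP; rewrite mulf_eq0 gt_eqF //= subr_eq0 => /eqP tangent_eq.
exact: powR_tangent_eq p_gt1 (u_ge0 f) (e_ge0 f) (esym tangent_eq).
Qed.

Lemma stationary_effort_optimalP e : optimal C c p alpha h e <-> e = u.
Proof.
have u_feas : feasible C h alpha u by split; rewrite ?u_active.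
split=> [[e_feas e_min]|->].
  have [_] := stationary_effort_argmin e_feas.
  by apply; rewrite -cost_le ?e_min.
split=> [|e' e'_feas]; first exact: u_feas.
by rewrite cost_le //; case: (stationary_effort_argmin e'_feas).
Qed.

End StationaryEffort.

Definition kkt_scale : R :=
  alpha / \sum_f (C *m h) f 0 * powR (efficiency h f 0) (p - 1)^-1.

(* Stationarity c_f e_f^(p-1) = mu (C h)_f of the Lagrangian gives e_f
   proportional to efficiency_f^(1/(p-1)); the scale makes the constraint
   active. *)
Definition kkt_effort : 'cV[R]_d :=
  \col_f (kkt_scale * powR (efficiency h f 0) (p - 1)^-1).

Section NonzeroBenefit.
Hypothesis efficiency_neq0 : efficiency h != 0.

Lemma kkt_weight_gt0 :
  0 < \sum_f (C *m h) f 0 * powR (efficiency h f 0) (p - 1)^-1.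
Proof.
case/matrix0Pn: efficiency_neq0 => g [j]; rewrite [j]ord1 => xg_neq0.
have xg_gt0 : 0 < efficiency h g 0 by rewrite lt_neqAle eq_sym xg_neq0 efficiency_ge0.
rewrite (bigD1 g) //= ltr_wpDr //; last first.
  by rewrite benefitE !mulr_gt0 ?powR_gt0.
by apply: sumr_ge0 => f _; rewrite mulr_ge0 ?powR_ge0.
Qed.

Lemma kkt_scale_gt0 : 0 < kkt_scale.
Proof. exact: divr_gt0 alpha_gt0 kkt_weight_gt0. Qed.

Lemma kkt_effort_ge0 f : 0 <= kkt_effort f 0.
Proof. by rewrite [kkt_effort f 0]mxE mulr_ge0 ?powR_ge0 ?ltW ?kkt_scale_gt0. Qed.

Lemma kkt_effort_stationary f :
  c f 0 * powR (kkt_effort f 0) (p - 1) = powR kkt_scale (p - 1) * (C *m h) f 0.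
Proof.
rewrite [kkt_effort f 0]mxE powRM ?powR_ge0 ?ltW ?kkt_scale_gt0 //.
by rewrite -powRrM mulVf ?gt_eqF // powRr1 ?efficiency_ge0 // benefitE; ring.
Qed.

Lemma kkt_effort_active : \sum_f (C *m h) f 0 * kkt_effort f 0 = alpha.
Proof.
under eq_bigr => f _ do rewrite [kkt_effort f 0]mxE mulrCA.
by rewrite -mulr_sumr mulfVK ?gt_eqF ?kkt_weight_gt0.
Qed.

Lemma optimal_kkt_effortP e : optimal C c p alpha h e <-> e = kkt_effort.
Proof.
exact: stationary_effort_optimalP (powR_gt0 _ kkt_scale_gt0) kkt_effort_ge0
  kkt_effort_stationary kkt_effort_active e.
Qed.

Lemma beta_desirable_kkt_effort k beta : 0 < beta ->
  beta_desirable [set k] beta kkt_effort <->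
  pow_dominant k beta ((p - 1)^-1 * 2) (efficiency h).
Proof.
move=> beta_gt0; rewrite (beta_desirable1 _ _ (ltW beta_gt0)).
have sq f : kkt_effort f 0 ^+ 2 =
    kkt_scale ^+ 2 * powR (efficiency h f 0) ((p - 1)^-1 * 2).
  by rewrite [kkt_effort f 0]mxE exprMn powRrM powR_mulrn ?powR_ge0.
rewrite (eq_bigr _ (fun f _ => sq f)) sq -mulr_sumr mulrCA.
by rewrite ler_pM2l ?exprn_gt0 ?kkt_scale_gt0.
Qed.

End NonzeroBenefit.

Lemma desirable_classifiers_powP k beta : 0 < beta ->
  desirable_classifiers C [set k] c p alpha beta h <->
  pow_dominant k beta ((p - 1)^-1 * 2) (efficiency h).
Proof.
move=> beta_gt0.
have [x0|x_neq0] := eqVneq (efficiency h) 0.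
  have s_neq0 : (p - 1)^-1 * 2 != 0 by rewrite mulf_neq0 ?invr_eq0 ?gt_eqF.
  split=> _; last by split=> // e [/(efficiency0_infeasible x0)].
  rewrite /pow_dominant x0 mxE powR0 // big1 ?mulr0 // => f _.
  by rewrite mxE powR0.
rewrite -beta_desirable_kkt_effort //; split=> [[_ opt_desirable]|desirable].
  by apply: opt_desirable; apply/optimal_kkt_effortP.
by split=> // e /optimal_kkt_effortP ->.
Qed.

End StrictlyConvexCost.

Section LinearCost.
Variables (h : 'cV[R]_d) (k : 'I_d).
Hypothesis Ch_ge0 : forall f, 0 <= (C *m h) f 0.

Lemma cost1 e : (forall f, 0 <= e f 0) -> cost c 1 e = \sum_f c f 0 * e f 0.
Proof.
move=> e_ge0; rewrite /cost invr1 powRr1; last exact: cost_sum_ge0.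
by apply: eq_bigr => f _; rewrite powRr1.
Qed.

Definition point_effort g : 'cV[R]_d :=
  \col_f (if f == g then alpha / (C *m h) g 0 else 0).

Lemma sum_point_effort (F : 'I_d -> R -> R) g : (forall f, F f 0 = 0) ->
  \sum_f F f (point_effort g f 0) = F g (alpha / (C *m h) g 0).
Proof.
move=> F0; rewrite (bigD1 g) //= big1 => [|f /negbTE fg]; last by rewrite mxE fg.
by rewrite mxE eqxx addr0.
Qed.

Lemma point_effort_ge0 g f : 0 <= point_effort g f 0.
Proof.
by rewrite mxE; case: ifP => // _; apply: divr_ge0 (ltW alpha_gt0) (Ch_ge0 g).
Qed.

Lemma point_effort_feasible g :
  0 < efficiency h g 0 -> feasible C h alpha (point_effort g).
Proof.
move=> xg_gt0; split=> [f|]; first exact: point_effort_ge0.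
rewrite (sum_point_effort (F := fun f v => (C *m h) f 0 * v)) => [|f].
  by rewrite mulrC mulfVK // gt_eqF ?benefit_gt0.
exact: mulr0.
Qed.

Lemma cost_point_effort g : 0 < efficiency h g 0 ->
  cost c 1 (point_effort g) = alpha / efficiency h g 0.
Proof.
move=> xg_gt0; rewrite cost1; last exact: point_effort_ge0.
rewrite (sum_point_effort (F := fun f v => c f 0 * v)) => [|f]; last exact: mulr0.
by rewrite benefitE; field; rewrite !gt_eqF.
Qed.

Lemma cost1_lower_bound M e : (forall f, efficiency h f 0 <= M) ->
  feasible C h alpha e -> alpha <= M * \sum_f c f 0 * e f 0.
Proof.
move=> le_M [e_ge0 e_feas]; apply: le_trans e_feas _.
rewrite mulr_sumr; apply: ler_sum => f _; rewrite benefitE mulrA.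
by rewrite ler_wpM2r // ler_wpM2r // ltW.
Qed.

Lemma point_effort_optimal g : 0 < efficiency h g 0 ->
  (forall f, efficiency h f 0 <= efficiency h g 0) ->
  optimal C c 1 alpha h (point_effort g).
Proof.
move=> xg_gt0 g_max; split=> [|e e_feas]; first exact: point_effort_feasible.
rewrite cost_point_effort // cost1; last by case: e_feas.
by rewrite ler_pdivrMr // mulrC cost1_lower_bound.
Qed.

Lemma point_effort_not_desirable beta g : 0 < beta -> g != k ->
  0 < efficiency h g 0 -> ~ beta_desirable [set k] beta (point_effort g).
Proof.
move=> beta_gt0 gk xg_gt0; rewrite (beta_desirable1 _ _ (ltW beta_gt0)).
rewrite (sum_point_effort (F := fun _ v => v ^+ 2)) => [|f]; last exact: expr0n.
rewrite [point_effort g k 0]mxE eq_sym (negbTE gk) expr0n /=.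
apply/negP; rewrite -ltNge.
by rewrite !mulr_gt0 ?exprn_gt0 // invr_gt0 benefitE mulr_gt0.
Qed.

Lemma optimal1_support e :
  (forall f, f != k -> efficiency h f 0 < efficiency h k 0) ->
  0 < efficiency h k 0 -> optimal C c 1 alpha h e ->
  forall f, f != k -> e f 0 = 0.
Proof.
move=> k_max xk_gt0 [[e_ge0 e_feas] e_min].
pose gap f := (efficiency h k 0 - efficiency h f 0) * c f 0 * e f 0.
have gap_ge0 f : 0 <= gap f.
  have xf_le_xk : efficiency h f 0 <= efficiency h k 0.
    by have [->|/k_max/ltW] := eqVneq f k.
  by rewrite /gap mulr_ge0 ?e_ge0 // mulr_ge0 ?subr_ge0 // ltW.
have sum_gap0 : \sum_f gap f = 0.
  apply/eqP; rewrite eq_le sumr_ge0 // andbT.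
  have := e_min _ (point_effort_feasible xk_gt0).
  rewrite cost_point_effort // cost1 // ler_pdivlMr // mulrC => cost_le.
  have -> : \sum_f gap f =
      efficiency h k 0 * \sum_f c f 0 * e f 0 - \sum_f (C *m h) f 0 * e f 0.
    by rewrite mulr_sumr -sumrB; apply: eq_bigr => f _; rewrite /gap benefitE; ring.
  by rewrite subr_le0 (le_trans cost_le).
move=> f fk; move: (psumr_eq0P (fun i _ => gap_ge0 i) sum_gap0 (i := f) isT).
move/eqP; rewrite /gap !mulf_eq0 subr_eq0 (gt_eqF (c_gt0 f)) orbF.
by case/orP=> [/eqP xkf|/eqP //]; move: (k_max f fk); rewrite xkf ltxx.
Qed.

Lemma desirable_classifiers_1P beta : 0 < beta <= 1 ->
  desirable_classifiers C [set k] c 1 alpha beta h <->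
  strict_argmax_or_zero k (efficiency h).
Proof.
case/andP=> beta_gt0 beta_le1.
have [x0|x_neq0] := eqVneq (efficiency h) 0.
  by split=> _; [left | split=> // e [/(efficiency0_infeasible x0)]].
case/matrix0Pn: (x_neq0) => g [j]; rewrite [j]ord1 => xg_neq0.
have xg_gt0 : 0 < efficiency h g 0 by rewrite lt_neqAle eq_sym xg_neq0 efficiency_ge0.
split=> [[_ opt_desirable]|[x0|k_max]].
- right=> f fk; rewrite ltNge; apply/negP.
  case/(exists_argmax_neq (x := fun i => efficiency h i 0) fk) => g' g'k g'_max.
  have xg'_gt0 : 0 < efficiency h g' 0 := lt_le_trans xg_gt0 (g'_max g).
  apply: (point_effort_not_desirable beta_gt0 g'k xg'_gt0).
  exact: opt_desirable (point_effort_optimal xg'_gt0 g'_max).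
- by move: x_neq0; rewrite x0 eqxx.
have xk_gt0 : 0 < efficiency h k 0.
  by have [<-|/k_max/(lt_trans xg_gt0)] := eqVneq g k.
split=> // e e_opt; have e_supp := optimal1_support k_max xk_gt0 e_opt.
rewrite (beta_desirable1 _ _ (ltW beta_gt0)) (bigD1 k) //= big1 ?addr0 => [|f fk].
  by rewrite ler_piMl ?sqr_ge0 // expr_le1 // ltW.
by rewrite e_supp ?expr0n.
Qed.

End LinearCost.

End EffortProgram.

Theorem proposition3 (R : realType) (d : nat) (D U : {set 'I_d})
    (A : 'M[R]_d) (c : 'cV[R]_d) (alpha p beta : R) :
  (0 < d)%N ->
  D :&: U = set0 -> D :|: U = [set: 'I_d] -> #|D| = 1%N ->
  is_dag A ->
  (forall f, 0 < c f 0) -> 0 < alpha -> 1 <= p <= 3 -> 0 < beta <= 1 ->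
  forall (h1 h2 : 'cV[R]_d) (lam : R),
    desirable_classifiers (contribution A) D c p alpha beta h1 ->
    desirable_classifiers (contribution A) D c p alpha beta h2 ->
    0 <= lam <= 1 ->
    desirable_classifiers (contribution A) D c p alpha beta
      (lam *: h1 + (1 - lam) *: h2).
Proof.
move=> _ _ _ D1 _ c_gt0 alpha_gt0 /andP[p_ge1 p_le3] beta01 h1 h2 lam.
have /cards1P[k ->] : #|D| == 1%N by rewrite D1.
set C := contribution A => H1 H2 /andP[lam_ge0 lam_le1].
have lam'_ge0 : 0 <= 1 - lam by rewrite subr_ge0.
have Ch_ge0 := benefit_comb_ge0 lam_ge0 lam'_ge0 H1.1 H2.1.
have [p1|p_neq1] := eqVneq p 1.
  rewrite p1 in H1 H2 *.
  have x1_max := (desirable_classifiers_1P c_gt0 alpha_gt0 k H1.1 beta01).1 H1.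
  have x2_max := (desirable_classifiers_1P c_gt0 alpha_gt0 k H2.1 beta01).1 H2.
  apply/(desirable_classifiers_1P c_gt0 alpha_gt0 k Ch_ge0 beta01).
  rewrite efficiency_comb; apply: strict_argmax_or_zero_conv => //.
  by rewrite addrC subrK.
have p_gt1 : 1 < p by rewrite lt_neqAle eq_sym p_neq1.
have s_ge1 : 1 <= (p - 1)^-1 * 2.
  by rewrite mulrC ler_pdivlMr ?subr_gt0 // mul1r; lra.
have [beta_gt0 _] := andP beta01.
have dom1 :=
  (desirable_classifiers_powP c_gt0 alpha_gt0 p_gt1 H1.1 k beta_gt0).1 H1.
have dom2 :=
  (desirable_classifiers_powP c_gt0 alpha_gt0 p_gt1 H2.1 k beta_gt0).1 H2.
apply/(desirable_classifiers_powP c_gt0 alpha_gt0 p_gt1 Ch_ge0 k beta_gt0).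
rewrite efficiency_comb; apply: pow_dominant_conv => //.
  exact: (efficiency_ge0 c_gt0 H1.1).
exact: (efficiency_ge0 c_gt0 H2.1).
Qed.
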